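(* Let $PS = D \cup LP \cup MP \cup IC$ be a P2P system such that no negation occurs in $LP$. Then the relation $\sqsupseteq$ (max-min preferability) is a partial order on the set of weak models of $PS$.
   Context: Peer atoms: a peer identifier is a positive integer; a peer atom is $i\!:\!p(t_1,\dots,t_k)$ with $i$ a peer identifier, $p$ a predicate and $t_j$ terms; $i\!:\!p$ is a peer predicate. A literal is an atom $A$ or its negation-as-failure $not\ A$. Built-in atoms are $X\,\theta\,Y$ with $\theta\in\{<,>,\le,\ge,=,\neq\}$. Rules (all safe): a standard rule $H\leftarrow \mathcal B$; an integrity constraint $\leftarrow \mathcal B$; a maximal mapping rule $i\!:\!h(X) \leftharpoonup j\!:\!(p_1(X_1),\dots,p_m(X_m),\varphi)$ with $i\neq j$; a minimal mapping rule, identical but with $\leftharpoondown$. A peer $P_i=\langle D_i,LP_i,MP_i,IC_i\rangle$ consists of a finite set $D_i$ of ground atoms with identifier $i$, a finite set $LP_i$ of standard rules all of whose atoms have identifier $i$, a finite set $MP_i$ of mapping rules with head identifier $i$, and a finite set $IC_i$ of integrity constraints over atoms with identifier $i$. A P2P system is a set $PS=\{P_1,\dots,P_n\}$ of peers in which every source identifier of a mapping rule lies in $[1..n]$; $D,LP,MP,IC$ are the unions of the components, and $PS$ is identified with $D\cup LP\cup MP\cup IC$. A predicate is derived if it heads a standard rule, a mapping predicate if it heads a mapping rule, base otherwise; each predicate has exactly one type and each mapping predicate heads exactly one mapping rule. Semantics: interpretation = set of ground peer atoms; $A$ true iff $A\in M$, $not\ A$ true iff $A\notin M$; a standard rule is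 satisfied iff its body is false or its head true; a constraint iff its body is false. $MM(\Pi)$ = inclusion-minimal models. $St(r)$ turns a mapping rule with head $H$, body $\mathcal B$ into $H\leftarrow\mathcal B$. $M$ is a weak model of $PS$ if $\{M\}=MM(St(PS^M))$, where $PS^M$ is obtained from $ground(PS)$ by removing every rule whose body contains $not\ A$ with $A\in M$, deleting negative literals from the remaining rules, and removing every ground mapping rule whose head is not in $M$. $M[\overline{MP}]$ (resp. $M[\underline{MP}]$) is the set of atoms of $M$ whose predicate heads a maximal (resp. minimal) mapping rule. For weak models $M,N$: $M\sqsupseteq N$ iff either $M[\overline{MP}]\supsetneq N[\overline{MP}]$, or $M[\overline{MP}]=N[\overline{MP}]$ and $M[\underline{MP}]\subseteq N[\underline{MP}]$. *)

From Stdlib Require Import List Arith.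
Import ListNotations.
Set Implicit Arguments.

Section P2P.
Variable C : Type.              (* constants (Herbrand universe) *)
Variable le : C -> C -> Prop.   (* order used to interpret built-ins *)

Inductive term := TVar (x : nat) | TConst (c : C).

Record atom := Atom { a_peer : nat; a_pred : nat; a_args : list term }.

Record gatom := GAtom { g_peer : nat; g_pred : nat; g_args : list C }.

Inductive cmp := CLt | CGt | CLe | CGe | CEq | CNeq.
Record builtin := Builtin { b_op : cmp; b_lhs : term; b_rhs : term }.

Inductive literal := LPos (A : atom) | LNeg (A : atom) | LBi (b : builtin).

(* mapping rule  i:h(X) <- j:(p_1(X_1),...,p_m(X_m), phi):
   the body atoms are given as (p_k, X_k) and are read as j:p_k(X_k) *)
Inductive rule :=
| RStd (H : atom) (B : list literal)
| RIC (B : list literal)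
| RMax (H : atom) (j : nat) (B : list (nat * list term)) (phi : list builtin)
| RMin (H : atom) (j : nat) (B : list (nat * list term)) (phi : list builtin).

Record peer := Peer { pD : list gatom; pLP : list rule; pMP : list rule; pIC : list rule }.

Definition term_vars (t : term) : list nat :=
  match t with TVar x => [x] | TConst _ => [] end.
Definition args_vars (ts : list term) : list nat := flat_map term_vars ts.
Definition atom_vars (A : atom) : list nat := args_vars (a_args A).
Definition bi_vars (b : builtin) : list nat := term_vars (b_lhs b) ++ term_vars (b_rhs b).
Definition lit_vars (l : literal) : list nat :=
  match l with LPos A | LNeg A => atom_vars A | LBi b => bi_vars b end.
Definition lit_atom_peer_ok (i : nat) (l : literal) : Prop :=
  match l with LPos A | LNeg A => a_peer A = i | LBi _ => True end.

Definition safe_body (hv : list nat) (B : list literal) : Prop :=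
  forall x, (In x hv \/ exists l, In l B /\ In x (lit_vars l)) ->
            exists A, In (LPos A) B /\ In x (atom_vars A).
Definition safe_map (H : atom) (B : list (nat * list term)) (phi : list builtin) : Prop :=
  forall x, (In x (atom_vars H) \/ exists b, In b phi /\ In x (bi_vars b)) ->
            exists pa, In pa B /\ In x (args_vars (snd pa)).
Definition safe (r : rule) : Prop :=
  match r with
  | RStd H B => safe_body (atom_vars H) B
  | RIC B => safe_body [] B
  | RMax H _ B phi | RMin H _ B phi => safe_map H B phi
  end.

Definition wf_peer (n i : nat) (P : peer) : Prop :=
  0 < i /\
  (forall a, In a (pD P) -> g_peer a = i) /\
  (forall r, In r (pLP P) -> safe r /\ exists H B, r = RStd H B /\ a_peer H = i /\
        forall l, In l B -> lit_atom_peer_ok i l) /\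
  (forall r, In r (pMP P) -> safe r /\ exists H j B phi,
        (r = RMax H j B phi \/ r = RMin H j B phi) /\ a_peer H = i /\ i <> j /\
        1 <= j <= n) /\
  (forall r, In r (pIC P) -> safe r /\ exists B, r = RIC B /\
        forall l, In l B -> lit_atom_peer_ok i l).

Definition allD (PS : list peer) : list gatom := flat_map pD PS.
Definition allLP (PS : list peer) : list rule := flat_map pLP PS.
Definition allMP (PS : list peer) : list rule := flat_map pMP PS.
Definition allIC (PS : list peer) : list rule := flat_map pIC PS.
Definition allRules (PS : list peer) : list rule := allLP PS ++ allMP PS ++ allIC PS.

(* peer predicate i:p is represented by the pair (i, p) *)
Definition ppred (A : atom) : nat * nat := (a_peer A, a_pred A).

Definition is_derived (PS : list peer) (q : nat * nat) : Prop :=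
  exists H B, In (RStd H B) (allLP PS) /\ ppred H = q.
Definition map_head (r : rule) : option atom :=
  match r with RMax H _ _ _ | RMin H _ _ _ => Some H | _ => None end.
Definition is_mapping (PS : list peer) (q : nat * nat) : Prop :=
  exists r H, In r (allMP PS) /\ map_head r = Some H /\ ppred H = q.
Definition is_max_mapping (PS : list peer) (q : nat * nat) : Prop :=
  exists H j B phi, In (RMax H j B phi) (allMP PS) /\ ppred H = q.
Definition is_min_mapping (PS : list peer) (q : nat * nat) : Prop :=
  exists H j B phi, In (RMin H j B phi) (allMP PS) /\ ppred H = q.

(* PS = {P_1,...,P_n}: the k-th element of the list (0-based) is the peer
   with identifier k+1 *)
Definition p2p_system (PS : list peer) : Prop :=
  (forall k P, nth_error PS k = Some P -> wf_peer (length PS) (S k) P) /\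
  (forall q, ~ (is_derived PS q /\ is_mapping PS q)) /\
  (forall r1 r2 H1 H2, In r1 (allMP PS) -> In r2 (allMP PS) ->
      map_head r1 = Some H1 -> map_head r2 = Some H2 -> ppred H1 = ppred H2 -> r1 = r2).

Definition no_negation_LP (PS : list peer) : Prop :=
  forall H B A, In (RStd H B) (allLP PS) -> ~ In (LNeg A) B.

Definition gterm (s : nat -> C) (t : term) : C :=
  match t with TVar x => s x | TConst c => c end.
Definition gatom_of (s : nat -> C) (A : atom) : gatom :=
  GAtom (a_peer A) (a_pred A) (map (gterm s) (a_args A)).

Definition eval_cmp (op : cmp) (x y : C) : Prop :=
  match op with
  | CLt => le x y /\ x <> y
  | CGt => le y x /\ x <> y
  | CLe => le x y
  | CGe => le y x
  | CEq => x = y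
  | CNeq => x <> y
  end.
Definition eval_bi (s : nat -> C) (b : builtin) : Prop :=
  eval_cmp (b_op b) (gterm s (b_lhs b)) (gterm s (b_rhs b)).

Inductive rkind := KStd | KIC | KMap.

(* a ground rule: head (None for a constraint), positive body atoms,
   negated body atoms, and the truth value of its ground built-in atoms *)
Record grule := GRule { gr_kind : rkind; gr_head : option gatom;
                        gr_pos : list gatom; gr_neg : list gatom; gr_bi : Prop }.

Fixpoint pos_atoms (B : list literal) : list atom :=
  match B with [] => [] | LPos A :: B' => A :: pos_atoms B' | _ :: B' => pos_atoms B' end.
Fixpoint neg_atoms (B : list literal) : list atom :=
  match B with [] => [] | LNeg A :: B' => A :: neg_atoms B' | _ :: B' => neg_atoms B' end.
Fixpoint bis (B : list literal) : list builtin :=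
  match B with [] => [] | LBi b :: B' => b :: bis B' | _ :: B' => bis B' end.

Definition ground_rule (s : nat -> C) (r : rule) : grule :=
  match r with
  | RStd H B => GRule KStd (Some (gatom_of s H)) (map (gatom_of s) (pos_atoms B))
                  (map (gatom_of s) (neg_atoms B)) (Forall (eval_bi s) (bis B))
  | RIC B => GRule KIC None (map (gatom_of s) (pos_atoms B))
                  (map (gatom_of s) (neg_atoms B)) (Forall (eval_bi s) (bis B))
  | RMax H j B phi | RMin H j B phi =>
      GRule KMap (Some (gatom_of s H))
        (map (fun pa => gatom_of s (Atom j (fst pa) (snd pa))) B) []
        (Forall (eval_bi s) phi)
  end.

Definition fact (a : gatom) : grule := GRule KStd (Some a) [] [] True.

Definition ground (PS : list peer) (g : grule) : Prop :=
  (exists a, In a (allD PS) /\ g = fact a) \/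
  (exists r s, In r (allRules PS) /\ g = ground_rule s r).

Definition interp := gatom -> Prop.

(* positive ground standard rule / constraint (result of St) *)
Record prule := PRule { pr_head : option gatom; pr_pos : list gatom; pr_bi : Prop }.

Definition St_reduct (PS : list peer) (M : interp) (p : prule) : Prop :=
  exists g, ground PS g /\
    (forall a, In a (gr_neg g) -> ~ M a) /\
    (gr_kind g = KMap -> exists h, gr_head g = Some h /\ M h) /\
    p = PRule (gr_head g) (gr_pos g) (gr_bi g).

Definition sat (M : interp) (p : prule) : Prop :=
  ((forall a, In a (pr_pos p) -> M a) /\ pr_bi p) ->
  match pr_head p with Some h => M h | None => False end.

Definition is_model (P : prule -> Prop) (M : interp) : Prop :=
  forall p, P p -> sat M p.

Definition subset (A B : interp) : Prop := forall a, A a -> B a.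

Definition minimal_model (P : prule -> Prop) (M : interp) : Prop :=
  is_model P M /\ forall N, is_model P N -> subset N M -> subset M N.

Definition weak_model (PS : list peer) (M : interp) : Prop :=
  minimal_model (St_reduct PS M) M /\
  forall N, minimal_model (St_reduct PS M) N -> N = M.

Definition restrict (M : interp) (sel : nat * nat -> Prop) : interp :=
  fun a => M a /\ sel (g_peer a, g_pred a).

(* M [= N  (M is max-min preferable to N) *)
Definition pref (PS : list peer) (M N : interp) : Prop :=
  let Mx := restrict M (is_max_mapping PS) in
  let Nx := restrict N (is_max_mapping PS) in
  let Mn := restrict M (is_min_mapping PS) in
  let Nn := restrict N (is_min_mapping PS) in
  (subset Nx Mx /\ ~ subset Mx Nx) \/
  ((forall a, Mx a <-> Nx a) /\ subset Mn Nn).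

End P2P.

Definition partial_order_on {T : Type} (S : T -> Prop) (R : T -> T -> Prop) : Prop :=
  (forall x, S x -> R x x) /\
  (forall x y, S x -> S y -> R x y -> R y x -> x = y) /\
  (forall x y z, S x -> S y -> S z -> R x y -> R y z -> R x z).

(* If M and N are each preferable to the other, they agree on all mapping atoms.
   Without negation in LP, the only dependence of St(PS^M) on M that can affect a rule
   with a head is the filter on the heads of ground mapping rules, so St(PS^M) and
   St(PS^N) have the same rules with a head.  The least model of these rules is then a
   minimal model of both reducts (constraints hold in it because it lies below any
   model of them), and uniqueness of the minimal model in the definition of weak model
   forces M = N.  Reflexivity and transitivity hold for any interpretations. *)
From Stdlib Require Import List.
Import ListNotations.

Section Preferability.
Context {C : Type} (PS : list (peer C)).

Definition mapping_atom (a : gatom C) : Prop :=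
  is_max_mapping PS (g_peer a, g_pred a) \/ is_min_mapping PS (g_peer a, g_pred a).

Lemma pref_refl (M : interp C) : pref PS M M.
Proof. right; split; [tauto | intros a Ha; exact Ha]. Qed.

Lemma pref_trans (M N K : interp C) : pref PS M N -> pref PS N K -> pref PS M K.
Proof.
  unfold pref, subset; cbv zeta.
  intros [[NM nMN] | [EMN MNmin]] [[KN nNK] | [ENK NKmin]].
  - left; split; [intros a Ha; apply NM, KN, Ha |].
    intro MK; apply nMN; intros a Ha; apply KN, MK, Ha.
  - left; split; [intros a Ha; apply NM, ENK, Ha |].
    intro MK; apply nMN; intros a Ha; apply ENK, MK, Ha.
  - left; split; [intros a Ha; apply EMN, KN, Ha |].
    intro MK; apply nNK; intros a Ha; apply MK, EMN, Ha.
  - right; split; [intro a; rewrite EMN; apply ENK |].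
    intros a Ha; apply NKmin, MNmin, Ha.
Qed.

Lemma pref_antisym_mapping (M N : interp C) :
  pref PS M N -> pref PS N M -> forall a, mapping_atom a -> M a -> N a.
Proof.
  unfold pref, subset; cbv zeta.
  intros [[NM nMN] | [EMN MNmin]] [[MN nNM] | [ENM NMmin]];
    try (exfalso; solve [ apply nMN, MN
                        | apply nMN; intro a; apply ENM
                        | apply nNM; intro a; apply EMN ]).
  intros a [Hmax | Hmin] Ma.
  - apply (EMN a); split; assumption.
  - apply (MNmin a); split; assumption.
Qed.

End Preferability.

Section LeastModel.
Context {C : Type}.

Definition least_model (P : prule C -> Prop) : interp C :=
  fun a => forall K, (forall p h, P p -> pr_head p = Some h -> sat K p) -> K a.

Lemma least_model_sat_headed (P : prule C -> Prop) p h :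
  P p -> pr_head p = Some h -> sat (least_model P) p.
Proof.
  intros Hp Eh [Hpos Hbi]; rewrite Eh; intros K HK.
  pose proof (HK p h Hp Eh) as Kp; unfold sat in Kp; rewrite Eh in Kp.
  apply Kp; split; [intros a Ha; exact (Hpos a Ha K HK) | exact Hbi].
Qed.

Lemma least_model_minimal (P P' : prule C -> Prop) (N : interp C) :
  (forall p h, pr_head p = Some h -> P p <-> P' p) ->
  is_model P' N -> minimal_model P' (least_model P).
Proof.
  intros Hheads HN.
  assert (Hbelow : forall K, is_model P' K -> subset (least_model P) K).
  { intros K HK a Ha; apply Ha; intros p h Hp Eh.
    apply HK, (Hheads p h Eh), Hp. }
  split.
  - intros p Hp; destruct (pr_head p) as [h |] eqn:Eh.
    + apply (least_model_sat_headed P p h); [apply (Hheads p h Eh), Hp | exact Eh].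
    + intros [Hpos Hbi]; rewrite Eh.
      pose proof (HN p Hp) as Np; unfold sat in Np; rewrite Eh in Np.
      apply Np; split; [intros a Ha; exact (Hbelow N HN a (Hpos a Ha)) | exact Hbi].
  - intros K HK _; exact (Hbelow K HK).
Qed.

Lemma weak_models_eq (le : C -> C -> Prop) (PS : list (peer C)) (M N : interp C) :
  weak_model le PS M -> weak_model le PS N ->
  (forall p h, pr_head p = Some h -> St_reduct le PS M p <-> St_reduct le PS N p) ->
  M = N.
Proof.
  intros [[HM _] Muniq] [[HN _] Nuniq] Hheads.
  assert (EM : least_model (St_reduct le PS M) = M).
  { apply Muniq, (least_model_minimal _ _ M); [tauto | exact HM]. }
  assert (EN : least_model (St_reduct le PS M) = N).
  { apply Nuniq, (least_model_minimal _ _ N); [exact Hheads | exact HN]. }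
  congruence.
Qed.

End LeastModel.

Lemma neg_atoms_nil {C : Type} (B : list (literal C)) :
  (forall A, ~ In (LNeg A) B) -> neg_atoms B = [].
Proof.
  induction B as [| [A | A | b] B IH]; intro Hno; simpl; auto.
  - apply IH; intros A' HA; apply (Hno A'); now right.
  - exfalso; apply (Hno A); now left.
  - apply IH; intros A' HA; apply (Hno A'); now right.
Qed.

Section P2PRules.
Context {C : Type} (le : C -> C -> Prop) (PS : list (peer C)).
Hypothesis Hsys : p2p_system PS.
Hypothesis Hno_neg : no_negation_LP PS.

Lemma wf_peer_of_in (f : peer C -> list (rule C)) r :
  In r (flat_map f PS) -> exists P i, In r (f P) /\ wf_peer (length PS) i P.
Proof.
  intro Hr; apply in_flat_map in Hr as [P [HP Hr]].
  apply In_nth_error in HP as [k Hk].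
  exists P, (S k); split; [exact Hr | exact (proj1 Hsys k P Hk)].
Qed.

Lemma allLP_std r : In r (allLP PS) -> exists H B, r = RStd H B.
Proof.
  intro Hr; apply wf_peer_of_in in Hr as [P [i [Hr (_ & _ & HLP & _)]]].
  destruct (HLP r Hr) as [_ (H & B & E & _)]; eauto.
Qed.

Lemma allMP_map r : In r (allMP PS) ->
  exists H j B phi, r = RMax H j B phi \/ r = RMin H j B phi.
Proof.
  intro Hr; apply wf_peer_of_in in Hr as [P [i [Hr (_ & _ & _ & HMP & _)]]].
  destruct (HMP r Hr) as [_ (H & j & B & phi & E & _)]; eauto 6.
Qed.

Lemma allIC_ic r : In r (allIC PS) -> exists B, r = RIC B.
Proof.
  intro Hr; apply wf_peer_of_in in Hr as [P [i [Hr (_ & _ & _ & _ & HIC)]]].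
  destruct (HIC r Hr) as [_ (B & E & _)]; eauto.
Qed.

Lemma ground_headed_shape g h :
  ground le PS g -> gr_head g = Some h ->
  gr_neg g = [] /\ (gr_kind g = KMap -> mapping_atom PS h).
Proof.
  intros [[a [_ ->]] | [r [s [Hr ->]]]] Eh; [split; easy |].
  apply in_app_or in Hr as [Hr | Hr]; [| apply in_app_or in Hr as [Hr | Hr]].
  - destruct (allLP_std r Hr) as [H [B ->]]; simpl.
    rewrite (neg_atoms_nil B (fun A => Hno_neg H B A Hr)); split; easy.
  - destruct (allMP_map r Hr) as [H [j [B [phi [-> | ->]]]]];
      simpl in Eh |- *; injection Eh as <-; split; try easy; intros _.
    + left; exists H, j, B, phi; split; [exact Hr | reflexivity].
    + right; exists H, j, B, phi; split; [exact Hr | reflexivity].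
  - destruct (allIC_ic r Hr) as [B ->]; discriminate.
Qed.

Lemma St_reduct_headed_transfer (M N : interp C) p h :
  (forall a, mapping_atom PS a -> M a -> N a) ->
  pr_head p = Some h -> St_reduct le PS M p -> St_reduct le PS N p.
Proof.
  intros HMN Eh [g (Hg & _ & Hmap & ->)]; simpl in Eh.
  destruct (ground_headed_shape g h Hg Eh) as [Hneg Hkind].
  exists g; repeat split; [exact Hg | | ].
  - rewrite Hneg; intros a [].
  - intro Hk; destruct (Hmap Hk) as [h' [Eh' Mh']].
    rewrite Eh in Eh'; injection Eh' as <-.
    exists h; split; [exact Eh | exact (HMN h (Hkind Hk) Mh')].
Qed.

End P2PRules.

Theorem proposition4 (C : Type) (le : C -> C -> Prop) (PS : list (peer C)) :
  p2p_system PS -> no_negation_LP PS ->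
  partial_order_on (weak_model le PS) (pref PS).
Proof.
  intros Hsys Hnn; split; [| split].
  - intros M _; apply pref_refl.
  - intros M N HM HN MN NM.
    pose proof (pref_antisym_mapping PS M N MN NM) as MN_map.
    pose proof (pref_antisym_mapping PS N M NM MN) as NM_map.
    apply (weak_models_eq le PS M N HM HN); intros p h Eh; split;
      apply (St_reduct_headed_transfer le PS Hsys Hnn _ _ p h); assumption.
  - intros M N K _ _ _; apply pref_trans.
Qed.
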